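(* Let $(\varphi_\alpha)_{\alpha>0}$ be a family of functions $\varphi_\alpha\colon\mathbb{R}\to\mathbb{R}$, each monotonically increasing (non-decreasing) and nonexpansive (i.e. $1$-Lipschitz) with $\varphi_\alpha(0)=0$. Then the following are equivalent: (1) for all $x\in\mathbb{R}$, $\lim_{\alpha\to 0}\varphi_\alpha(x)=x$; (2) for all $x\in\mathbb{R}$, $\lim_{\alpha\to0}\varphi_\alpha^{-1}(x)=\{x\}$.
   Context: For $x\in\mathbb{R}$, $\varphi_\alpha^{-1}(x)=\{y\in\mathbb{R}:\varphi_\alpha(y)=x\}$ denotes the (possibly empty) preimage. The statement $\lim_{\alpha\to0}\varphi_\alpha^{-1}(x)=\{x\}$ means by definition $\lim_{\alpha\to 0}\sup_{y\in\varphi_\alpha^{-1}(x)}|y-x|=0$, with the convention $\sup_{y\in\emptyset}|y-x|:=\infty$. *)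

From HB Require Import structures.
From mathcomp Require Import all_boot all_order all_algebra.
From mathcomp Require Import all_classical all_reals all_analysis.
Set Implicit Arguments. Unset Strict Implicit. Unset Printing Implicit Defensive.
Import Order.TTheory GRing.Theory Num.Theory.
Import numFieldNormedType.Exports.
Local Open Scope classical_set_scope.
Local Open Scope ring_scope.

Definition preim_pt (R : realType) (f : R -> R) (x : R) : set R :=
  [set y | f y = x].

Definition preim_dev (R : realType) (f : R -> R) (x : R) : \bar R :=
  if pselect (preim_pt f x !=set0) then
    ereal_sup [set (`|y - x|)%:E | y in preim_pt f x]
  else +oo%E.

From HB Require Import structures.
From mathcomp Require Import all_boot all_order all_algebra.
From mathcomp Require Import all_classical all_reals all_analysis.
From mathcomp Require Import lra.
Import Order.TTheory GRing.Theory Num.Theory.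
Import numFieldNormedType.Exports.
Local Open Scope classical_set_scope.
Local Open Scope ring_scope.

(* If phi a (x - e) < x < phi a (x + e), monotonicity traps every solution of
   phi a y = x in [x - e, x + e] and continuity provides one; so the preimage
   shrinks to x as soon as phi a converges to the identity at x - e and x + e.
   Conversely, for y in the preimage of x, nonexpansiveness gives
   |phi a x - x| = |phi a x - phi a y| <= |x - y|. *)

Lemma nonexpansive_continuous (K : numFieldType) (V W : normedModType K)
    (f : V -> W) :
  (forall x y, `|f x - f y| <= `|x - y|) -> continuous f.
Proof.
move=> f_nexp z; apply/cvgrPdist_le => e e0.
near=> t; apply: le_trans (f_nexp _ _) _; near: t.
exact: (@cvgr_dist_le _ V _ (nbhs z) _ id z cvg_id e e0).
Unshelve. all: by end_near. Qed.

Lemma cvge0_bounded {T : Type} {F : set_system T} {FF : Filter F}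
    (R : realType) (u : T -> \bar R) :
  (forall e : R, 0 < e -> \forall t \near F, (0 <= u t <= e%:E)%E) ->
  u @ F --> 0%E.
Proof.
move=> u_small; apply/fine_cvgP; split.
  apply: filterS (u_small 1 ltr01) => t /andP[u_ge0 u_le1].
  by rewrite ge0_fin_numE // (le_lt_trans u_le1) ?ltry.
apply/cvgrPdist_le => e e0; apply: filterS (u_small e e0) => t /=.
case: (u t) => [r| |] //= /andP[r0]; last by rewrite leNgt ltry.
by rewrite lee_fin sub0r normrN => re; rewrite ger0_norm // -lee_fin.
Qed.

Section PreimageDeviation.
Variables (R : realType) (f : R -> R).

Lemma preim_dev_ge0 (x : R) : (0 <= preim_dev f x)%E.
Proof.
rewrite /preim_dev; case: (pselect _) => [[y fy]|_] //=.
apply: le_trans (ereal_sup_ubound _); last by exists y.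
by rewrite lee_fin.
Qed.

Lemma preim_dev_le (x e : R) : preim_pt f x !=set0 ->
  (forall y, f y = x -> `|y - x| <= e) -> (preim_dev f x <= e%:E)%E.
Proof.
rewrite /preim_dev => ne dev_le; case: (pselect _) => //= _.
by apply: ge_ereal_sup => _ [y fy <-]; rewrite lee_fin dev_le.
Qed.

Lemma dist_le_preim_dev (x : R) :
  (forall u v, `|f u - f v| <= `|u - v|) ->
  ((`|f x - x|)%:E <= preim_dev f x)%E.
Proof.
rewrite /preim_dev => f_nexp; case: (pselect _) => [[y fy]|_] /=; last exact: leey.
apply: le_trans (ereal_sup_ubound _); last by exists y.
by rewrite lee_fin -[in X in `|_ - X|]fy [leRHS]distrC f_nexp.
Qed.

Lemma nondecreasing_preim_dev_le (x e : R) :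
  {homo f : u v / u <= v} -> continuous f ->
  f (x - e) < x < f (x + e) -> (preim_dev f x <= e%:E)%E.
Proof.
move=> f_nd f_cont /andP[f_below f_above].
have e0 : 0 < e.
  rewrite ltNge; apply/negP => e_le0.
  by have := f_nd _ _ (_ : x + e <= x - e); lra.
apply: preim_dev_le => [|y fy].
  have [|||c _ fc] := @IVT R f (x - e) (x + e) x; last by exists c.
  - lra.
  - exact: continuous_subspaceT.
  - by rewrite ge_min le_max (ltW f_below) (ltW f_above) orbT.
rewrite ler_norml; apply/andP; split; rewrite leNgt; apply/negP => y_out.
  by have := f_nd _ _ (ltW (_ : y < x - e)); lra.
by have := f_nd _ _ (ltW (_ : x + e < y)); lra.
Qed.

End PreimageDeviation.

Theorem lemma2p2 (R : realType) (phi : R -> R -> R)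
  (hmono : forall a : R, 0 < a -> forall x y : R, x <= y -> phi a x <= phi a y)
  (hlip : forall a : R, 0 < a -> forall x y : R, `|phi a x - phi a y| <= `|x - y|)
  (h0 : forall a : R, 0 < a -> phi a 0 = 0) :
  (forall x : R, phi a x @[a --> 0^'+] --> x) <->
  (forall x : R, preim_dev (phi a) x @[a --> 0^'+] --> 0%E).
Proof.
split=> phi_cvg x.
- apply: cvge0_bounded => e e0; near=> a.
  have a0 : 0 < a by near: a; exact: nbhs_right_gt.
  rewrite preim_dev_ge0 nondecreasing_preim_dev_le //.
  + exact: hmono.
  + by apply: nonexpansive_continuous; exact: hlip.
  + have : `|x - e - phi a (x - e)| < e.
      by near: a; apply: (@cvgr_dist_lt _ R^o); [exact: phi_cvg|].
    have : `|x + e - phi a (x + e)| < e.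
      by near: a; apply: (@cvgr_dist_lt _ R^o); [exact: phi_cvg|].
    by rewrite !ltr_norml => /andP[? ?] /andP[? ?]; apply/andP; split; lra.
- apply/cvgrPdist_le => e e0.
  have e0E : (0 < e%:E)%E by rewrite lte_fin.
  near=> a.
  have a0 : 0 < a by near: a; exact: nbhs_right_gt.
  rewrite distrC -lee_fin (le_trans (dist_le_preim_dev _ _ _ (hlip a a0))) //.
  by apply: ltW; near: a; exact: (phi_cvg x _ (open_ereal_lt' e0E)).
Unshelve. all: by end_near. Qed.
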